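(* Let $a$ and $m$ be coprime positive integers. Then for all complex $s$ with ${\rm Re}(s)>1$, \[ m^s\,\Phi(s,a/m)=\sum_{d\mid m}\frac{d^s}{\varphi(d)}\sum_{\chi\in\hat{U}_d} \chi(a)\,\tau(\overline{\chi})\,L(s,\chi). \]
   Context: For real $\beta$ and ${\rm Re}(s)>1$, $\Phi(s,\beta)=\sum_{n=1}^\infty e^{2\pi i\beta n}n^{-s}$ (periodic zeta function). For a positive integer $d$, $\hat U_d$ is the group of Dirichlet characters of modulus $d$ (not necessarily primitive), $L(s,\chi)=\sum_{n\ge1}\chi(n)n^{-s}$, and $\tau(\chi)=\sum_{\nu\bmod d}\chi(\nu)e^{2\pi i\nu/d}$ is the Gauss sum computed with respect to the modulus $d$; $\overline\chi$ is the complex conjugate character; $\varphi$ is Euler's totient function. *)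

From HB Require Import structures.
From mathcomp Require Import all_boot all_order all_algebra.
From mathcomp Require Import all_classical all_reals all_analysis.
From mathcomp Require Import complex.
Set Implicit Arguments. Unset Strict Implicit. Unset Printing Implicit Defensive.
Import Order.TTheory GRing.Theory Num.Theory.
Import numFieldTopology.Exports numFieldNormedType.Exports.
Local Open Scope classical_set_scope.
Local Open Scope ring_scope.
Local Open Scope complex_scope.

Section Defs.
Variable R : realType.
Local Notation C := R[i].

Definition cexpi (t : R) : C := cos t +i* sin t.

Definition cpow (n : nat) (s : C) : C :=
  let l : R := ln (n%:R : R) in
  ((expR (complex.Re s * l) : R)%:C : C) * cexpi (complex.Im s * l).

(* Series are limits of partial sums in C^o, i.e. C with its modulus topology
   (the ^o alias carries MathComp-Analysis' normed-field instances). *)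
Definition periodic_zeta (s : C) (beta : R) : C :=
  limn ((fun N => \sum_(1 <= n < N) (cexpi (2 * pi * beta * (n%:R : R)) * cpow n (- s)))
          : nat -> C^o).

(* Dirichlet characters of modulus d (not necessarily primitive), viewed as
   arithmetic functions: completely multiplicative, d-periodic, and nonzero
   exactly on integers coprime to d (the extension by 0 of a character of
   (Z/dZ)^x). *)
Definition is_dchar (d : nat) (chi : nat -> C) : Prop :=
  [/\ chi 1%N = 1,
      (forall m n : nat, chi (m * n)%N = chi m * chi n),
      (forall n : nat, chi (n + d)%N = chi n) &
      (forall n : nat, (chi n != 0) = coprime n d)].

Definition dchars (d : nat) : set (nat -> C) := [set chi | is_dchar d chi].

Definition dirichletL (s : C) (chi : nat -> C) : C :=
  limn ((fun N => \sum_(1 <= n < N) (chi n * cpow n (- s))) : nat -> C^o).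

Definition gauss (d : nat) (chi : nat -> C) : C :=
  \sum_(nu < d) (chi nu * cexpi (2 * pi * (nu%:R : R) / (d%:R : R))).

Definition conjchar (chi : nat -> C) : nat -> C := fun n => (chi n)^*.

End Defs.

(* Write g = gcd(n, m), d = m / g and n = g n'.  Then e^(2 pi i a n / m) = e^(2 pi i a n' / d)
   with a n' prime to d, and the orthogonality relations for the characters modulo d give
   phi(d) e^(2 pi i b / d) = sum_chi chi(b) tau(conj chi) for every b prime to d.  Hence
   m^s e^(2 pi i a n / m) n^-s is the n-th term of the Dirichlet series of the right-hand side,
   in which L(s, chi) is dilated by the factor m / d; the characters attached to the other
   divisors of m vanish at n / (m / d).  All the series converge for Re s > 1, so the identity
   of partial sums passes to the limit.  Orthogonality needs, for y prime to d and not 1 mod d,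
   a character chi with chi(y) <> 1: it comes from the irreducible characters of the abelian
   group (Z/dZ)^x, transported from algC to C along their roots of unity. *)

From HB Require Import structures.
From mathcomp Require Import all_boot all_order all_algebra all_fingroup all_solvable.
From mathcomp Require Import all_field all_character.
From mathcomp Require Import all_classical all_reals all_analysis.
From mathcomp Require Import complex.
From mathcomp Require Import ring lra.
Set Implicit Arguments. Unset Strict Implicit. Unset Printing Implicit Defensive.
Import Order.TTheory GRing.Theory Num.Theory.
Import numFieldTopology.Exports numFieldNormedType.Exports.
Local Open Scope classical_set_scope.
Local Open Scope ring_scope.
Local Open Scope complex_scope.

Section ComplexPowers.
Variable R : realType.
Local Notation C := R[i].

Lemma cexpi0 : cexpi 0 = 1 :> C.
Proof. by rewrite /cexpi cos0 sin0. Qed.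

Lemma cexpiD (x y : R) : cexpi (x + y) = cexpi x * cexpi y :> C.
Proof.
rewrite /cexpi cosD sinD; apply/eqP; rewrite eq_complex /=.
by apply/andP; split; apply/eqP; ring.
Qed.

Lemma cexpi_2pi_nat (k : nat) : cexpi (2 * pi * k%:R) = 1 :> C.
Proof.
elim: k => [|k IH]; first by rewrite mulr0 cexpi0.
have -> : 2 * pi * k.+1%:R = 2 * pi * k%:R + pi *+ 2 :> R.
  by rewrite -mulr_natl -natr1; ring.
by rewrite cexpiD IH mul1r /cexpi cos2pi sin2pi.
Qed.

Lemma cexpi_2pi_modn (b d : nat) :
  cexpi (2 * pi * (b %% d)%:R / d%:R) = cexpi (2 * pi * b%:R / d%:R) :> C.
Proof.
have [->|d_gt0] := posnP d; first by rewrite modn0.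
have d_neq0 : d%:R != 0 :> R by rewrite pnatr_eq0 -lt0n.
have -> : 2 * pi * b%:R / d%:R =
          2 * pi * (b %/ d)%:R + 2 * pi * (b %% d)%:R / d%:R :> R.
  by rewrite {1}(divn_eq b d) natrD natrM; field.
by rewrite cexpiD cexpi_2pi_nat mul1r.
Qed.

Lemma norm_cexpi (x : R) : `|cexpi x| = 1 :> C.
Proof. by rewrite normc_def /= cos2Dsin2 sqrtr1. Qed.

Lemma norm_realc (r : R) : `|r%:C| = `|r|%:C :> C.
Proof. by rewrite normc_def /= expr0n addr0 sqrtr_sqr. Qed.

Lemma normcI : `|'i%C| = 1 :> C.
Proof. by rewrite normc_def /= expr0n expr1n add0r sqrtr1. Qed.

Lemma realcM (x y : R) : (x * y)%:C = x%:C * y%:C :> C.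
Proof. by apply/eqP; rewrite eq_complex /= !mulr0 !mul0r subr0 addr0 !eqxx. Qed.

Lemma cpowM (m n : nat) (s : C) : (0 < m)%N -> (0 < n)%N ->
  cpow (m * n) s = cpow m s * cpow n s.
Proof.
move=> m_gt0 n_gt0.
rewrite /cpow natrM lnM ?posrE ?ltr0n // !mulrDr expRD cexpiD realcM.
by rewrite mulrACA.
Qed.

Lemma cpowNK (n : nat) (s : C) : cpow n (- s) * cpow n s = 1.
Proof.
have [ReN ImN] : complex.Re (- s) = - complex.Re s /\ complex.Im (- s) = - complex.Im s.
  by case: s.
rewrite /cpow ReN ImN mulrACA -realcM -expRD -cexpiD.
by rewrite !mulNr !addNr expR0 cexpi0 mulr1.
Qed.

Lemma norm_cpow (n : nat) (s : C) :
  `|cpow n s| = (expR (complex.Re s * ln n%:R))%:C.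
Proof. by rewrite normrM norm_realc norm_cexpi mulr1 ger0_norm // expR_ge0. Qed.

End ComplexPowers.

Section DirichletSeriesConvergence.
Variable R : realType.
Local Notation C := R[i].

(* The right-hand side is [\int_k^(k+1) x^-sg dx]. *)
Lemma riemann_term_le (sg : R) (k : nat) : 1 < sg -> (0 < k)%N ->
  expR (- sg * ln k.+1%:R) <=
  (expR ((1 - sg) * ln k%:R) - expR ((1 - sg) * ln k.+1%:R)) / (sg - 1).
Proof.
move=> sg_gt1 k_gt0.
set a := ln (k%:R : R); set b := ln (k.+1%:R : R); set t := sg - 1.
have t_gt0 : 0 < t by rewrite subr_gt0.
have k1_gt1 : 1 < k.+1%:R :> R by rewrite ltr1n ltnS.
have ln_gap : expR (- b) <= b - a.
  have k1_inv : expR (- b) = k.+1%:R^-1 by rewrite expRN lnK // posrE ltr0n.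
  have k1_inv_lt1 : k.+1%:R^-1 < 1 :> R by rewrite invf_lt1 // ltr0n.
  have := @le_ln1Dx R (- k.+1%:R^-1); rewrite k1_inv.
  have -> : 1 - k.+1%:R^-1 = k%:R / k.+1%:R :> R.
    by rewrite -natr1; field; rewrite natr1 gt_eqF // ltr0n.
  rewrite ln_div ?posrE ?ltr0n // -/a -/b => ln_le.
  suff : a - b <= - k.+1%:R^-1 by rewrite lerNr opprB.
  by apply: ln_le; rewrite ltrN2.
have exp_gap := expR_ge1Dx (t * (b - a)).
have -> : expR ((1 - sg) * a) = expR ((1 - sg) * b) * expR (t * (b - a)).
  by rewrite -expRD /t; congr expR; ring.
have -> : expR (- sg * b) = expR ((1 - sg) * b) * expR (- b).
  by rewrite -expRD; congr expR; ring.
rewrite ler_pdivlMr //.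
have E_ge0 := expR_ge0 ((1 - sg) * b).
set E := expR ((1 - sg) * b) in E_ge0 *.
have ln_gap_scaled : 0 <= E * t * (b - a - expR (- b)).
  by rewrite !mulr_ge0 ?subr_ge0 // ltW.
have exp_gap_scaled : 0 <= E * (expR (t * (b - a)) - (1 + t * (b - a))).
  by rewrite mulr_ge0 // subr_ge0.
nra.
Qed.

Lemma riemann_partial_sum_le (sg : R) (N : nat) : 1 < sg ->
  \sum_(1 <= n < N) expR (- sg * ln n%:R) <= 1 + (sg - 1)^-1.
Proof.
move=> sg_gt1.
pose f k := expR ((1 - sg) * ln (k%:R : R)).
have t_gt0 : 0 < sg - 1 by rewrite subr_gt0.
have telescope M : \sum_(1 <= n < M.+2) expR (- sg * ln n%:R) <=
                   1 + (1 - f M.+1) / (sg - 1).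
  elim: M => [|M IH].
    by rewrite big_nat1 /f ln1 !mulr0 expR0 subrr mul0r addr0.
  rewrite big_nat_recr //=.
  have := riemann_term_le sg_gt1 (ltn0Sn M); rewrite -/(f M.+1) -/(f M.+2).
  have -> : (1 - f M.+2) / (sg - 1) =
            (1 - f M.+1) / (sg - 1) + (f M.+1 - f M.+2) / (sg - 1).
    by rewrite -mulrDl; congr (_ * _); ring.
  lra.
case: N => [|[|N]]; last first.
  apply: le_trans (telescope N) _; rewrite lerD2l ler_pdivrMr // mulVf ?gt_eqF //.
  by rewrite gerBl expR_ge0.
all: by rewrite big_geq // addr_ge0 // invr_ge0 ltW.
Qed.

Lemma cvg_partial_sums_dominated (v r : nat -> R) (B : R) :
  (forall n, `|v n| <= r n) -> (forall N, \sum_(1 <= n < N) r n <= B) ->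
  cvgn (fun N => \sum_(1 <= n < N) v n).
Proof.
move=> vr rB; rewrite (is_cvg_series_restrict 1 v).
apply: normed_cvg; apply: nondecreasing_is_cvgn.
  move=> n p np /=; rewrite !seriesEnat /= (@big_cat_nat _ _ _ n 0 p) //= lerDl.
  by apply: sumr_ge0 => k _; exact: normr_ge0.
have B_ge0 : 0 <= B by have := rB 0%N; rewrite big_geq.
exists (`|v 0%N| + B) => _ [[|n] _ <-] /=; rewrite seriesEnat /=.
  by rewrite big_geq // addr_ge0.
by rewrite big_ltn // lerD // (le_trans _ (rB n.+1)) // ler_sum.
Qed.

Lemma norm_complex_le (p q : R) : `|p +i* q| <= (`|p| + `|q|)%:C :> C.
Proof.
have -> : p +i* q = p%:C + q%:C * 'i :> C.
  by apply/eqP; rewrite eq_complex /=; apply/andP; split; apply/eqP; ring.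
apply: le_trans (ler_normD _ _) _.
rewrite normrM !norm_realc normcI mulr1.
by rewrite lecE /= addr0 eqxx lexx.
Qed.

Lemma cvg_complex (u : nat -> C) (x y : R) :
  (fun n => complex.Re (u n)) @ \oo --> x ->
  (fun n => complex.Im (u n)) @ \oo --> y ->
  (u : nat -> C^o) @ \oo --> (x +i* y : C^o).
Proof.
move=> /cvgrPdist_lt Re_cvg /cvgrPdist_lt Im_cvg; apply/cvgrPdist_lt => e e_gt0.
move: (e_gt0); rewrite ltcE /= => /andP [/eqP Im_e Re_e_gt0].
have e2_gt0 : 0 < complex.Re e / 2 by rewrite divr_gt0.
apply: filterS2 (Re_cvg _ e2_gt0) (Im_cvg _ e2_gt0) => n /=.
case: (u n) => p q /= dRe dIm.
apply: le_lt_trans (norm_complex_le _ _) _.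
have -> : e = (complex.Re e)%:C by case: e e_gt0 Im_e {Re_e_gt0 e2_gt0 dRe dIm} => ? ? /= _ ->.
rewrite ltcR; lra.
Qed.

Lemma cvg_partial_sums_dominatedC (u : nat -> C) (r : nat -> R) (B : R) :
  (forall n, `|u n| <= (r n)%:C) -> (forall N, \sum_(1 <= n < N) r n <= B) ->
  cvgn ((fun N => \sum_(1 <= n < N) u n) : nat -> C^o).
Proof.
move=> ur rB.
have Re_le n : `|complex.Re (u n)| <= r n.
  by rewrite -lecR; apply: le_trans (normc_ge_Re _) (ur n).
have Im_le n : `|complex.Im (u n)| <= r n.
  rewrite -lecR -[complex.Im _]opprK -ReiNIm normrN.
  by apply: le_trans (normc_ge_Re _) _; rewrite normrM normcI mulr1.
have ReD : {morph @complex.Re R : x y / x + y} by case=> ? ? [].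
have ImD : {morph @complex.Im R : x y / x + y} by case=> ? ? [].
apply/cvg_ex; eexists; apply: cvg_complex.
  under eq_fun do rewrite (big_morph _ ReD (erefl (@complex.Re R 0))).
  exact: cvg_partial_sums_dominated Re_le rB.
under eq_fun do rewrite (big_morph _ ImD (erefl (@complex.Im R 0))).
exact: cvg_partial_sums_dominated Im_le rB.
Qed.

Definition dirichlet_partial (c : nat -> C) (s : C) (N : nat) : C^o :=
  \sum_(1 <= n < N) c n * cpow n (- s).

Lemma cvg_dirichlet_partial (c : nat -> C) (s : C) :
  1 < complex.Re s -> (forall n, `|c n| <= 1) -> cvgn (dirichlet_partial c s).
Proof.
move=> Re_s_gt1 c_le1.
apply: (cvg_partial_sums_dominatedC (r := fun n => expR (- complex.Re s * ln n%:R))).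
  move=> n; rewrite normrM norm_cpow -[X in _ <= X]mul1r.
  have -> : complex.Re (- s) = - complex.Re s by case: s {Re_s_gt1}.
  by apply: ler_wpM2r; rewrite // lecR expR_ge0.
by move=> N; apply: riemann_partial_sum_le.
Qed.

End DirichletSeriesConvergence.

Lemma prim_root_exists (F : numClosedFieldType) (n : nat) : (0 < n)%N ->
  exists z : F, n.-primitive_root z.
Proof.
move=> n_gt0; pose p : {poly F} := 'X^n - 1.
have [r p_split] := closed_field_poly_normal p.
rewrite (monicP _) ?monicXnsubC // scale1r in p_split.
have r_roots : all n.-unity_root r by apply/allP=> z; rewrite -root_prod_XsubC -p_split.
have r_size : (n < (size r).+1)%N by rewrite -(size_prod_XsubC r id) -p_split size_XnsubC.
have [|z] := hasP (has_prim_root n_gt0 r_roots _ r_size); last by exists z.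
by rewrite -separable_prod_XsubC -p_split separable_Xn_sub_1 // pnatr_eq0 -lt0n.
Qed.

Lemma prim_root_transfer (F K : fieldType) (N : nat) (z : F) (w : K) :
  N.-primitive_root z -> N.-primitive_root w ->
  exists f : F -> K, forall k, f (z ^+ k) = w ^+ k.
Proof.
move=> z_prim w_prim; have N_gt0 := prim_order_gt0 z_prim.
pose zs := mkseq (fun k => z ^+ k) N.
have zs_uniq : uniq zs.
  rewrite map_inj_in_uniq ?iota_uniq // => i j; rewrite !mem_iota /= => i_lt j_lt.
  by move/eqP; rewrite (eq_prim_root_expr z_prim) !modn_small // => /eqP.
exists (fun c => w ^+ index c zs) => k.
rewrite -(prim_expr_mod z_prim) -[in RHS](prim_expr_mod w_prim).
have k_lt : (k %% N < N)%N by rewrite ltn_pmod.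
by rewrite -[z ^+ _](@nth_mkseq _ 0 _ N) // index_uniq ?size_mkseq.
Qed.

Lemma irr_separates (gT : finGroupType) (G : {group gT}) (g : gT) :
  g != 1%g -> exists i : Iirr G, 'chi[G]_i g != 'chi_i 1%g.
Proof.
move=> g_neq1; apply/existsP; apply: contraR g_neq1; rewrite negb_exists.
move=> /forallP chi_g; suff : g \in (\bigcap_i cfker 'chi[G]_i)%SET by rewrite TI_cfker_irr inE.
by apply/bigcapP => i _; rewrite cfkerEirr inE; apply/negPn.
Qed.

Section UnitsZp.
Variable d : nat.
Hypothesis d_gt1 : (1 < d)%N.

Definition unitZp (n : nat) : {unit 'Z_d} := insubd (1%g : {unit 'Z_d}) (n%:R : 'Z_d).

Lemma val_unitZp n : coprime n d -> val (unitZp n) = n%:R.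
Proof. by move=> n_cop; rewrite /unitZp insubdK // unfold_in /= unitZpE // coprime_sym. Qed.

Lemma unitZp1 : unitZp 1 = 1%g.
Proof. by apply: val_inj; rewrite val_unitZp ?coprime1n. Qed.

Lemma unitZpM m n : coprime m d -> coprime n d -> unitZp (m * n) = (unitZp m * unitZp n)%g.
Proof.
move=> m_cop n_cop; apply: val_inj.
by rewrite FinRing.val_unitM !val_unitZp ?coprimeMl ?m_cop ?n_cop // natrM.
Qed.

Lemma unitZpD n : unitZp (n + d) = unitZp n.
Proof. by rewrite /unitZp natrD pchar_Zp // addr0. Qed.

Lemma unitZp_neq1 n : coprime n d -> (n %% d != 1)%N -> unitZp n != 1%g.
Proof.
move=> n_cop; apply: contra => /eqP/(congr1 val); rewrite val_unitZp // FinRing.val_unit1.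
move=> /(congr1 (@nat_of_ord _)).
by rewrite -[X in _ = nat_of_ord X -> _]mulr1n !val_Zp_nat // (modn_small d_gt1) => ->.
Qed.

End UnitsZp.

Section SeparatingCharacter.
Variables (R : realType) (d : nat).
Hypothesis d_gt1 : (1 < d)%N.
Local Notation C := R[i].

(* The irreducible characters of the abelian group (Z/dZ)^x are algC-valued; they are
   moved to C along the isomorphism of the groups of #|G|-th roots of unity. *)
Lemma exists_dchar_neq1 x : coprime x d -> (x %% d != 1)%N ->
  exists2 psi : nat -> C, is_dchar d psi & psi x != 1.
Proof.
move=> x_cop x_neq1; set G := units_Zp d.
have lin i : 'chi[G]_i \is a linear_char by move/char_abelianP: (units_Zp_abelian d).
have [i chi_x] := irr_separates G (unitZp_neq1 d_gt1 x_cop x_neq1).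
rewrite lin_char1 // in chi_x.
have N_gt0 : (0 < #|G|)%N := cardG_gt0 G.
have [z z_prim] := C_prim_root_exists N_gt0.
have [w w_prim] := prim_root_exists C N_gt0.
have [f fE] := prim_root_transfer z_prim w_prim.
have chi_root g : exists k, 'chi_i g = z ^+ k.
  have chi_unity : 'chi_i g ^+ #|G| = 1.
    by rewrite -lin_charX ?inE // expg_cardG ?inE // lin_char1.
  by have [k ->] := prim_rootP z_prim chi_unity; exists k.
pose psi n := if coprime n d then f ('chi_i (unitZp d n)) else 0.
exists psi; last first.
  have [k chi_xE] := chi_root (unitZp d x).
  by rewrite /psi x_cop chi_xE fE -(prim_order_dvd w_prim) (prim_order_dvd z_prim) -chi_xE.
split.
- by rewrite /psi coprime1n unitZp1 // (lin_char1 (lin i)) -(expr0 z) fE.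
- move=> m n; rewrite /psi coprimeMl.
  case m_cop: (coprime m d); case n_cop: (coprime n d); rewrite ?mul0r ?mulr0 //=.
  rewrite unitZpM // lin_charM ?inE //.
  have [k1 ->] := chi_root (unitZp d m); have [k2 ->] := chi_root (unitZp d n).
  by rewrite -exprD !fE exprD.
- by move=> n; rewrite /psi unitZpD // -coprime_modl modnDr coprime_modl.
- move=> n; rewrite /psi; case: (coprime n d); last by rewrite eqxx.
  have [k ->] := chi_root (unitZp d n).
  by rewrite fE expf_neq0 // (prim_root_eq0 w_prim) -lt0n.
Qed.

End SeparatingCharacter.

Section DirichletCharacters.
Variables (R : realType) (d : nat).
Hypothesis d_gt0 : (0 < d)%N.
Local Notation C := R[i].

Section OneCharacter.
Variable chi : nat -> C.
Hypothesis chi_dchar : is_dchar d chi.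

Lemma dchar1 : chi 1 = 1. Proof. by case: chi_dchar. Qed.
Lemma dcharM m n : chi (m * n) = chi m * chi n. Proof. by case: chi_dchar. Qed.
Lemma dcharD n : chi (n + d) = chi n. Proof. by case: chi_dchar. Qed.
Lemma dchar_neq0 n : (chi n != 0) = coprime n d. Proof. by case: chi_dchar. Qed.

Lemma dchar_modn n : chi n = chi (n %% d)%N.
Proof.
rewrite {1}(divn_eq n d); elim: (n %/ d)%N => [|q IH]; first by rewrite mul0n add0n.
by rewrite mulSnr -addnAC dcharD.
Qed.

Lemma dchar_eq0 n : ~~ coprime n d -> chi n = 0.
Proof. by rewrite -dchar_neq0 negbK => /eqP. Qed.

Lemma dcharX n k : chi (n ^ k) = chi n ^+ k.
Proof. by elim: k => [|k IH]; rewrite ?expn0 ?expr0 ?dchar1 // expnS exprS dcharM IH. Qed.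

Lemma dchar_totient n : coprime n d -> chi n ^+ totient d = 1.
Proof.
by move=> n_cop; rewrite -dcharX dchar_modn (Euler_exp_totient n_cop) -dchar_modn dchar1.
Qed.

Lemma norm_dchar n : coprime n d -> `|chi n| = 1.
Proof.
move=> n_cop; apply/eqP; rewrite -(@pexpr_eq1 _ _ (totient d)) ?totient_gt0 //.
by rewrite -normrX dchar_totient // normr1.
Qed.

Lemma norm_dchar_le1 n : `|chi n| <= 1.
Proof.
have [n_cop|n_ncop] := boolP (coprime n d); first by rewrite norm_dchar.
by rewrite dchar_eq0 // normr0 ler01.
Qed.

Lemma conjchar_expr n : coprime n d -> conjchar chi n = chi n ^+ (totient d).-1.
Proof.
move=> n_cop; apply: (mulfI (x := chi n)); first by rewrite dchar_neq0.
rewrite -exprS prednK ?totient_gt0 // dchar_totient // /conjchar.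
by rewrite -sqr_normc norm_dchar // expr1n.
Qed.

End OneCharacter.

Definition principal_dchar : nat -> C := fun n => (coprime n d)%:R.

Definition mulchar (chi psi : nat -> C) : nat -> C := fun n => chi n * psi n.

Lemma principal_dchar_is_dchar : is_dchar d principal_dchar.
Proof.
rewrite /principal_dchar; split.
- by rewrite coprime1n.
- by move=> m n; rewrite coprimeMl; case: (coprime m d); rewrite ?mul0r ?mul1r.
- by move=> n; rewrite -coprime_modl modnDr coprime_modl.
- by move=> n; rewrite pnatr_eq0 eqb0 negbK.
Qed.

Lemma mulchar_is_dchar (chi psi : nat -> C) :
  is_dchar d chi -> is_dchar d psi -> is_dchar d (mulchar chi psi).
Proof.
move=> chi_dchar psi_dchar; rewrite /mulchar; split.
- by rewrite !dchar1 // mulr1.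
- by move=> m n; rewrite !dcharM // mulrACA.
- by move=> n; rewrite !dcharD.
- by move=> n; rewrite mulf_eq0 negb_or !dchar_neq0 // andbb.
Qed.

Lemma conjchar_is_dchar (chi : nat -> C) : is_dchar d chi -> is_dchar d (conjchar chi).
Proof.
move=> chi_dchar; rewrite /conjchar; split.
- by rewrite dchar1 // conjc1.
- by move=> m n; rewrite dcharM // rmorphM.
- by move=> n; rewrite dcharD.
- by move=> n; rewrite conjc_eq0 dchar_neq0.
Qed.

Lemma conjcharK (chi : nat -> C) : conjchar (conjchar chi) = chi.
Proof. by apply: funext => n; rewrite /conjchar conjcK. Qed.

Lemma mulcharK (psi chi : nat -> C) : is_dchar d psi -> is_dchar d chi ->
  mulchar (conjchar psi) (mulchar psi chi) = chi.
Proof.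
move=> psi_dchar chi_dchar; apply: funext => n; rewrite /mulchar /conjchar mulrA.
have [n_cop|n_ncop] := boolP (coprime n d); last by rewrite (dchar_eq0 chi_dchar) ?mulr0.
by rewrite (mulrC (psi n)^*%C) -sqr_normc norm_dchar // expr1n mul1r.
Qed.

Lemma finite_dchars : finite_set (@dchars R d).
Proof.
have [w w_prim] : exists w : C, (totient d).-primitive_root w.
  by apply: prim_root_exists; rewrite totient_gt0.
pose val_of (o : option 'I_(totient d)) : C := if o is Some k then w ^+ k else 0.
pose decode (t : {ffun 'I_d -> option 'I_(totient d)}) : nat -> C :=
  fun n => val_of (t (Ordinal (ltn_pmod n d_gt0))).
apply: (@sub_finite_set _ _ (decode @` setT)); last exact: finite_image.
move=> chi /= chi_dchar.
have : forall j : 'I_d, exists o, chi j = val_of o.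
  move=> j; have [j_cop|j_ncop] := boolP (coprime j d); last first.
    by exists None; rewrite dchar_eq0.
  by have [k ->] := prim_rootP w_prim (dchar_totient chi_dchar j_cop); exists (Some k).
move=> /boolp.choice [t tE]; exists (finfun t) => //.
by apply: funext => n; rewrite /decode ffunE -tE /= -dchar_modn.
Qed.

Definition dchar_seq : seq (nat -> C) := finmap.enum_fset (fset_set (@dchars R d)).

Lemma fsbig_dchars (F : (nat -> C) -> C) :
  \sum_(chi \in dchars d) F chi = \sum_(chi <- dchar_seq) F chi.
Proof. by rewrite fsbig_finite //; exact: finite_dchars. Qed.

Lemma mem_dchar_seq (chi : nat -> C) : (chi \in dchar_seq) = `[< is_dchar d chi >].
Proof.
rewrite /dchar_seq in_fset_set; last exact: finite_dchars.
by apply/idP/asboolP; rewrite in_setE.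
Qed.

Lemma dchar_seqP (chi : nat -> C) : chi \in dchar_seq -> is_dchar d chi.
Proof. by rewrite mem_dchar_seq => /asboolP. Qed.

Lemma uniq_dchar_seq : uniq dchar_seq.
Proof. exact: finmap.fset_uniq. Qed.

Lemma sum_dchar_seq_mulchar (psi : nat -> C) (F : (nat -> C) -> C) : is_dchar d psi ->
  \sum_(chi <- dchar_seq) F chi = \sum_(chi <- dchar_seq) F (mulchar psi chi).
Proof.
move=> psi_dchar; rewrite -(big_map (mulchar psi) xpredT F).
apply/perm_big/uniq_perm; first exact: uniq_dchar_seq.
  rewrite map_inj_in_uniq ?uniq_dchar_seq // => chi1 chi2 chi1_in chi2_in E.
  rewrite -(mulcharK psi_dchar (dchar_seqP chi1_in)) E mulcharK //; exact: dchar_seqP.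
move=> chi; apply/idP/mapP => [chi_in | [chi' chi'_in ->]]; last first.
  by rewrite mem_dchar_seq; apply/asboolP/mulchar_is_dchar => //; exact: dchar_seqP.
exists (mulchar (conjchar psi) chi).
  rewrite mem_dchar_seq; apply/asboolP/mulchar_is_dchar.
    exact: conjchar_is_dchar.
  exact: dchar_seqP.
by rewrite -{1}(conjcharK psi) mulcharK //; [exact: conjchar_is_dchar|exact: dchar_seqP].
Qed.

Lemma principal_dchar_in_seq : principal_dchar \in dchar_seq.
Proof. by rewrite mem_dchar_seq; apply/asboolP/principal_dchar_is_dchar. Qed.

Lemma sum_dchar_seq y : coprime y d ->
  \sum_(chi <- dchar_seq) chi y = (y %% d == 1 %% d)%N%:R * (size dchar_seq)%:R.
Proof.
move=> y_cop; have [y1|y_neq1] := eqVneq (y %% d)%N (1 %% d)%N.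
  rewrite mul1r -sum1_size natr_sum; apply: eq_big_seq => chi /dchar_seqP chi_dchar.
  by rewrite (dchar_modn chi_dchar) y1 -dchar_modn // dchar1.
rewrite mul0r; have d_gt1 : (1 < d)%N.
  by move: y_neq1 d_gt0; case: d => [|[|?]] //; rewrite !modn1 eqxx.
have [psi psi_dchar psi_y] :
    exists2 psi : nat -> C, is_dchar d psi & psi y != 1.
  by apply: exists_dchar_neq1; rewrite // -(modn_small d_gt1).
have E := sum_dchar_seq_mulchar (fun chi => chi y) psi_dchar.
rewrite /mulchar -mulr_sumr in E.
have : (1 - psi y) * \sum_(chi <- dchar_seq) chi y = 0 by rewrite mulrBl -E mul1r subrr.
by move/eqP; rewrite mulf_eq0 subr_eq0 eq_sym (negbTE psi_y) => /eqP.
Qed.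

Lemma sum_principal_dchar : \sum_(x < d) principal_dchar x = (totient d)%:R.
Proof.
rewrite totient_count_coprime natr_sum big_mkord; apply: eq_bigr => i _.
by rewrite /principal_dchar coprime_sym.
Qed.

Lemma sum_nonprincipal_dchar (chi : nat -> C) : is_dchar d chi -> chi <> principal_dchar ->
  \sum_(x < d) chi x = 0.
Proof.
move=> chi_dchar chi_neq.
have [y [y_cop chi_y]] : exists y, coprime y d /\ chi y != 1.
  apply: contra_notP chi_neq => chi_eq1; apply: funext => n; rewrite /principal_dchar.
  have [n_cop|n_ncop] := boolP (coprime n d); last by rewrite dchar_eq0.
  by apply: contra_notP chi_eq1 => chi_n; exists n; split => //; apply/eqP.
have [u yu] : exists u, (y * u = 1 %[mod d])%N.
  by exists (y ^ (totient d).-1)%N; rewrite -expnS prednK ?totient_gt0 // Euler_exp_totient.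
pose h (x : 'I_d) : 'I_d := Ordinal (ltn_pmod (x * y) d_gt0).
have h_inj : injective h.
  move=> x1 x2 /(congr1 val) /= E; apply: val_inj => /=.
  rewrite -(modn_small (ltn_ord x1)) -(modn_small (ltn_ord x2)).
  have : (x1 * y * u = x2 * y * u %[mod d])%N by rewrite -modnMml E modnMml.
  by rewrite -!mulnA -(modnMmr x1) -(modnMmr x2) yu !modnMmr !muln1.
have sum_chiM : \sum_(x < d) chi x = (\sum_(x < d) chi x) * chi y.
  rewrite {1}(reindex_inj h_inj) /= mulr_suml.
  by apply: eq_bigr => x _; rewrite -dchar_modn // dcharM.
have : (\sum_(x < d) chi x) * (chi y - 1) = 0 by rewrite mulrBr mulr1 -sum_chiM subrr.
by move/eqP; rewrite mulf_eq0 subr_eq0 (negbTE chi_y) orbF => /eqP.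
Qed.

(* Evaluate [\sum_(x < d) \sum_chi chi x] in both orders. *)
Lemma size_dchar_seq : size dchar_seq = totient d.
Proof.
apply/eqP; rewrite -(eqr_nat C); apply/eqP.
have sum_over_x : \sum_(x < d) \sum_(chi <- dchar_seq) chi x = (size dchar_seq)%:R.
  rewrite (bigD1 (Ordinal (ltn_pmod 1 d_gt0))) //= sum_dchar_seq; last first.
    by rewrite coprime_modl coprime1n.
  rewrite modn_mod eqxx mul1r big1 ?addr0 // => x x_neq1.
  have [x_cop|x_ncop] := boolP (coprime x d); last first.
    by rewrite big1_seq // => chi /andP [_ /dchar_seqP chi_dchar]; rewrite dchar_eq0.
  rewrite sum_dchar_seq // modn_small //; case: eqP => [x1|_]; last by rewrite mul0r.
  by case/eqP: x_neq1; apply: val_inj.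
rewrite -sum_over_x exchange_big /=.
rewrite (bigD1_seq principal_dchar) ?principal_dchar_in_seq ?uniq_dchar_seq //=.
rewrite sum_principal_dchar big1_seq ?addr0 // => chi /andP [chi_neq chi_in].
by apply: sum_nonprincipal_dchar (dchar_seqP chi_in) _; apply/eqP.
Qed.

Lemma sum_dchar_mul_conj b n : coprime b d ->
  \sum_(chi <- dchar_seq) chi b * conjchar chi n =
  ((n %% d)%N == (b %% d)%N)%:R * (totient d)%:R.
Proof.
move=> b_cop; have [n_cop|n_ncop] := boolP (coprime n d); last first.
  have -> : ((n %% d)%N == (b %% d)%N) = false.
    by apply: contraNF n_ncop => /eqP nb; rewrite -coprime_modl nb coprime_modl.
  rewrite mul0r big1_seq // => chi /andP [_ /dchar_seqP chi_dchar].
  by rewrite /conjchar (dchar_eq0 chi_dchar n_ncop) conjc0 mulr0.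
under eq_big_seq => chi /dchar_seqP chi_dchar do
  rewrite conjchar_expr // -dcharX // -dcharM //.
rewrite sum_dchar_seq ?coprimeMl ?b_cop ?coprimeXl // size_dchar_seq.
congr ((_ : bool)%:R * _); apply/eqP/eqP => [bn1|nb].
  have : (b * n ^ (totient d).-1 * n = 1 * n %[mod d])%N by rewrite -modnMml bn1 modnMml.
  rewrite mul1n -mulnA -expnSr prednK ?totient_gt0 //.
  by rewrite -modnMmr Euler_exp_totient // modnMmr muln1 => ->.
rewrite -modnMmr -modnXm nb modnXm modnMmr -expnS prednK ?totient_gt0 //.
exact: Euler_exp_totient.
Qed.

Lemma sum_dchar_gauss b : coprime b d ->
  \sum_(chi <- dchar_seq) chi b * gauss d (conjchar chi) =
  (totient d)%:R * cexpi (2 * pi * b%:R / d%:R).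
Proof.
move=> b_cop; rewrite /gauss.
under eq_bigr do rewrite big_distrr.
rewrite exchange_big /=.
have inner (nu : 'I_d) :
    \sum_(chi <- dchar_seq) chi b * (conjchar chi nu * cexpi (2 * pi * nu%:R / d%:R)) =
    ((nu %% d)%N == (b %% d)%N)%:R * (totient d)%:R * cexpi (2 * pi * nu%:R / d%:R).
  by rewrite -sum_dchar_mul_conj // big_distrl; apply: eq_bigr => chi _; rewrite mulrA.
rewrite (eq_bigr _ (fun nu _ => inner nu)).
rewrite (bigD1 (Ordinal (ltn_pmod b d_gt0))) //= modn_mod eqxx mul1r cexpi_2pi_modn.
rewrite big1 ?addr0 // => nu nu_neq; rewrite modn_small //.
case: eqP => [nu_b|_]; last by rewrite !mul0r.
by case/eqP: nu_neq; apply: val_inj.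
Qed.

End DirichletCharacters.

Lemma cvg_sum_seq (K : numFieldType) (V : normedModType K) (I : eqType) (r : seq I)
    (f : I -> nat -> V) (l : I -> V) :
  (forall i, i \in r -> f i @ \oo --> l i) ->
  (fun N => \sum_(i <- r) f i N) @ \oo --> \sum_(i <- r) l i.
Proof.
move=> f_cvg; rewrite big_seq; under eq_fun do rewrite big_seq.
by apply: cvg_big => //; exact: add_continuous.
Qed.

Section Expansion.
Variable R : realType.
Local Notation C := R[i].

Definition dilated (g : nat) (u : nat -> C) (n : nat) : C :=
  if (g %| n)%N then u (n %/ g)%N else 0.

Lemma sum_dilated (g : nat) (u : nat -> C) (N : nat) : (0 < g)%N ->
  \sum_(1 <= n < N.+1) dilated g u n = \sum_(1 <= k < (N %/ g).+1) u k.
Proof.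
move=> g_gt0; elim: N => [|N IH]; first by rewrite div0n !big_geq.
rewrite big_nat_recr //= IH /dilated (divnS _ g_gt0).
case: (g %| N.+1)%N; rewrite ?add1n ?add0n ?addr0 //.
by rewrite [RHS]big_nat_recr.
Qed.

Lemma cvg_dilated (g : nat) (u : nat -> C) (l : C) : (0 < g)%N ->
  ((fun N => \sum_(1 <= n < N) u n) : nat -> C^o) @ \oo --> (l : C^o) ->
  ((fun N => \sum_(1 <= n < N) dilated g u n) : nat -> C^o) @ \oo --> (l : C^o).
Proof.
move=> g_gt0 /cvgrPdist_lt u_cvg; apply/cvgrPdist_lt => e e_gt0.
have [M _ u_near] := u_cvg e e_gt0.
exists (g * M).+1 => // -[|N] //=; rewrite ltnS => gM_le.
rewrite sum_dilated //; apply: u_near => /=.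
by apply: leqW; rewrite leq_divRL // mulnC.
Qed.

Lemma divisor_eq_gcd (m n d : nat) : (0 < m)%N -> (d %| m)%N -> (m %/ d %| n)%N ->
  coprime (n %/ (m %/ d)) d -> d = (m %/ gcdn n m)%N.
Proof.
move=> m_gt0 dm gn n'_cop; set g := (m %/ d)%N in gn n'_cop *.
have m_eq : m = (g * d)%N by rewrite divnK.
have g_gt0 : (0 < g)%N by move: m_gt0; rewrite m_eq muln_gt0 => /andP [].
have n_eq : n = (g * (n %/ g))%N by rewrite mulnC divnK.
have -> : gcdn n m = g by rewrite {1}n_eq {1}m_eq -muln_gcdr (eqP n'_cop) muln1.
by rewrite {1}m_eq mulKn.
Qed.

Lemma dilated_dchar_eq0 (m n d : nat) (chi : nat -> C) (s : C) :
  (0 < m)%N -> (d %| m)%N -> is_dchar d chi -> d != (m %/ gcdn n m)%N ->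
  dilated (m %/ d) (fun k => chi k * cpow k (- s)) n = 0.
Proof.
move=> m_gt0 dm chi_dchar d_neq; rewrite /dilated; case: ifP => // gn.
rewrite (dchar_eq0 (n := (n %/ (m %/ d))%N) chi_dchar) ?mul0r //.
by apply: contra d_neq => n'_cop; rewrite (divisor_eq_gcd m_gt0 dm gn n'_cop).
Qed.

Lemma expansion_term (a m n : nat) (s : C) :
  (0 < m)%N -> coprime a m -> (0 < n)%N ->
  cpow m s * (cexpi (2 * pi * (a%:R / m%:R) * n%:R) * cpow n (- s)) =
  \sum_(d <- divisors m) (cpow d s / (totient d)%:R *
     \sum_(chi <- dchar_seq R d) (chi a * gauss d (conjchar chi) *
        dilated (m %/ d) (fun k => chi k * cpow k (- s)) n)).
Proof.
move=> m_gt0 am_cop n_gt0.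
set g := gcdn n m; set d0 := (m %/ g)%N; set n' := (n %/ g)%N.
have g_gt0 : (0 < g)%N by rewrite gcdn_gt0 n_gt0.
have m_eq : m = (g * d0)%N by rewrite mulnC divnK // dvdn_gcdr.
have n_eq : n = (g * n')%N by rewrite mulnC divnK // dvdn_gcdl.
have d0_gt0 : (0 < d0)%N by move: m_gt0; rewrite m_eq muln_gt0 => /andP [].
have n'_gt0 : (0 < n')%N by move: n_gt0; rewrite n_eq muln_gt0 => /andP [].
have n'_cop : coprime n' d0.
  by rewrite /coprime -(eqn_pmul2l g_gt0) muln_gcdr -n_eq -m_eq muln1.
have d0_div : d0 \in divisors m by rewrite -dvdn_divisors // m_eq dvdn_mull.
rewrite (bigD1_seq d0) ?divisors_uniq //= [X in _ + X]big1_seq ?addr0; last first.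
  move=> d /andP [d_neq d_div]; have dm : (d %| m)%N by rewrite dvdn_divisors.
  rewrite big1_seq ?mulr0 // => chi /andP [_ /(dchar_seqP (dvdn_gt0 m_gt0 dm)) chi_dchar].
  by rewrite dilated_dchar_eq0 ?mulr0.
have -> : (m %/ d0)%N = g by rewrite {1}m_eq mulnK.
rewrite /dilated dvdn_gcdl -/n'.
under eq_big_seq => chi /(dchar_seqP d0_gt0) chi_dchar do
  rewrite mulrA (mulrAC (chi a)) -(dcharM chi_dchar).
rewrite -big_distrl /= sum_dchar_gauss //; last first.
  by rewrite coprimeMl n'_cop andbT (coprime_dvdr _ am_cop) // m_eq dvdn_mull.
have cpow_eq : cpow m s * cpow n (- s) = cpow d0 s * cpow n' (- s).
  by rewrite m_eq n_eq !cpowM // mulrACA (mulrC (cpow g s)) cpowNK mul1r.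
have arg_eq : 2 * pi * (a%:R / m%:R) * n%:R = 2 * pi * (a * n')%:R / d0%:R :> R.
  rewrite m_eq n_eq !natrM; field.
  by rewrite !pnatr_eq0 -!lt0n g_gt0 d0_gt0.
have totient_neq0 : (totient d0)%:R != 0 :> C by rewrite pnatr_eq0 -lt0n totient_gt0.
by rewrite arg_eq mulrCA cpow_eq; field.
Qed.

End Expansion.

Theorem proposition1 (R : realType) (a m : nat) :
  (0 < a)%N -> (0 < m)%N -> coprime a m ->
  forall s : R[i], 1 < complex.Re s ->
  cpow m s * periodic_zeta s (a%:R / m%:R) =
  \sum_(d <- divisors m)
     (cpow d s / (totient d)%:R *
      \sum_(chi \in dchars d) (chi a * gauss d (conjchar chi) * dirichletL s chi)).
Proof.
move=> _ m_gt0 am_cop s Re_s_gt1.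
have divisor_gt0 : {in divisors m, forall d, (0 < d)%N}.
  by move=> d; rewrite -dvdn_divisors //; exact: dvdn_gt0.
under eq_big_seq => d /divisor_gt0 d_gt0 do rewrite fsbig_dchars //.
set rhs := \sum_(d <- divisors m) _.
pose e n := cexpi (2 * pi * (a%:R / m%:R) * n%:R) : R[i].
pose Q N : R[i]^o := \sum_(d <- divisors m) (cpow d s / (totient d)%:R *
  \sum_(chi <- dchar_seq R d) (chi a * gauss d (conjchar chi) *
    \sum_(1 <= n < N) dilated (m %/ d) (fun k => chi k * cpow k (- s)) n)).
have QE N : Q N = cpow m s * dirichlet_partial e s N.
  rewrite /dirichlet_partial mulr_sumr (eq_big_nat _ _ (fun n n_in =>
    expansion_term s m_gt0 am_cop (proj1 (andP n_in)))) exchange_big /=.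
  apply: eq_bigr => d _; rewrite -mulr_sumr exchange_big /=; congr (_ * _).
  by apply: eq_bigr => chi _; rewrite mulr_sumr.
have Q_cvg : Q @ \oo --> (rhs : R[i]^o).
  apply: cvg_sum_seq => d d_in; have d_gt0 := divisor_gt0 d d_in; apply: cvgMl_tmp.
  apply: cvg_sum_seq => chi /(dchar_seqP d_gt0) chi_dchar; apply: cvgMl_tmp.
  apply: cvg_dilated; first by rewrite divn_gt0 // dvdn_leq // dvdn_divisors.
  exact: cvg_dirichlet_partial Re_s_gt1 (norm_dchar_le1 d_gt0 chi_dchar).
have zeta_cvg : dirichlet_partial e s @ \oo --> (cpow m (- s) * rhs : R[i]^o).
  have -> : dirichlet_partial e s = (fun N => cpow m (- s) * Q N).
    by apply: funext => N; rewrite QE mulrA cpowNK mul1r.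
  exact: cvgMl_tmp.
rewrite /periodic_zeta (cvg_lim (@norm_hausdorff _ _) zeta_cvg).
by rewrite mulrA (mulrC (cpow m s)) cpowNK mul1r.
Qed.
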